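(* Assume $\nu$ satisfies Assumption (A), $\mathcal M$ satisfies Assumption (B), let $0<\gamma<1$, $\delta_1\in(0,1)$, and assume $M_1\ge-\ln(\delta_1/C)\frac{1}{c\,\phi(\kappa_0)}$ with $\kappa_0=\frac{(1-\gamma^2)\widehat\sigma_0(\mathcal M)^2}{8K_\infty K_{\mathcal L}}$, where $\widehat\sigma_0(\mathcal M)^2=\max_{\mu\in\mathcal P}\mathrm{Var}[g_\mu(Z)]$. Then $$\mathbb{P}\Big[\mathrm{Var}\big[g_{\overline\mu_1}(Z)\mid\overline Z^{1:\infty}\big]\ge\gamma^2\max_{\mu\in\mathcal P}\mathrm{Var}\big[g_\mu(Z)\mid\overline Z^{1:\infty}\big]\Big]\ge1-\delta_1,$$ i.e. $\mathbb{P}[\overline\sigma_0(\mathcal M)\ge\gamma\widehat\sigma_0(\mathcal M)]\ge1-\delta_1$, where $\overline\sigma_0(\mathcal M)=\sqrt{\mathrm{Var}[g_{\overline\mu_1}(Z)\mid\overline Z^{1:\infty}]}$.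
   Context: $Z$ is an $\mathbb{R}^d$-valued random vector with law $\nu$; $L^2_{\nu,0}(\mathbb{R}^d)=\{g\in L^2_\nu:\int g\,d\nu=0\}$, $\|g\|=\sqrt{\mathrm{Var}[g(Z)]}$. $\mathcal P\subset\mathbb{R}^p$; $f_\mu$ continuous, in $L^2_\nu$; $g_\mu=f_\mu-\mathbb{E}[f_\mu(Z)]$; $\mathcal M=\{g_\mu:\mu\in\mathcal P\}$; $d_n(\mathcal M)=\inf_{V_n}\sup_\mu\inf_{h\in V_n}\|g_\mu-h\|$ over $n$-dimensional subspaces $V_n$. $\mathcal L$: Lipschitz functions, $\|f\|_{\mathcal L}$ Lipschitz constant. For $\overline Z=(Z_k)_{k\le M}$: $\mathbb{E}_{\overline Z}(f)=\frac1M\sum_kf(Z_k)$, $\mathrm{Var}_{\overline Z}(f)=\mathbb{E}_{\overline Z}(f^2)-\mathbb{E}_{\overline Z}(f)^2$. $\overline Z^n=(Z^n_k)_{1\le k\le M_n}$, all $Z^n_k$ i.i.d. with law $\nu$ independent of $Z$, $\overline Z^{1:\infty}=(\overline Z^n)_n$. $\overline\mu_1\in\operatorname{argmax}_{\mu\in\mathcal P}\mathrm{Var}_{\overline Z^1}(g_\mu)$ with $g_{\overline\mu_1}\ne0$ (first step of the MC-greedy algorithm). Assumption (A): $\exists\alpha>1,\beta>0$ with $\int_{\mathbb{R}^d}e^{\beta|x|^\alpha}d\nu(x)<\infty$. $\phi(\kappa)=\kappa^2\mathbf 1_{\kappa\le1}+\kappa^\alpha\mathbf 1_{\kappa>1}$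 ($d=1$), $(\kappa/\log(2+1/\kappa))^2\mathbf 1_{\kappa\le1}+\kappa^\alpha\mathbf 1_{\kappa>1}$ ($d=2$), $\kappa^d\mathbf 1_{\kappa\le1}+\kappa^\alpha\mathbf 1_{\kappa>1}$ ($d\ge3$). $c,C>0$ are constants (depending on $\nu,d,\alpha,\beta$; they exist under (A) by Fournier–Guillin) such that for all $M$, all i.i.d. $\overline Z=(Z_k)_{k\le M}$ of law $\nu$, all $\kappa>0$: $\mathbb{P}[\sup_{\|f\|_{\mathcal L}\le1}|\mathbb{E}[f(Z)]-\mathbb{E}_{\overline Z}(f)|\ge\kappa]\le Ce^{-cM\phi(\kappa)}$. Assumption (B): (B1) $\mathcal M$ compact in $L^2_{\nu,0}$, $K_2=\sup_\mu\|g_\mu\|<\infty$; (B2) $\mathcal M\subset\mathcal L$, $K_{\mathcal L}=\sup_\mu\|g_\mu\|_{\mathcal L}<\infty$; (B3) $\mathcal M\subset L^\infty$, $K_\infty=\sup_\mu\|g_\mu\|_{L^\infty}<\infty$; (B4) $d_n(\mathcal M)>0$ for all $n$. *)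

(* R^d is modelled as [d.-tuple R] with its product
   (coordinate) sigma-algebra, which is the Borel sigma-algebra of R^d, and the
   Euclidean norm/distance defined below. *)
From HB Require Import structures.
From mathcomp Require Import all_boot all_order all_algebra.
From mathcomp Require Import all_classical all_reals all_analysis.
From mathcomp Require Import ess_sup_inf.
Set Implicit Arguments.
Unset Strict Implicit.
Unset Printing Implicit Defensive.
Import Order.TTheory GRing.Theory Num.Theory.
Import numFieldNormedType.Exports.
Local Open Scope classical_set_scope.
Local Open Scope ring_scope.

Section Defs.
Variable R : realType.

Definition enorm (d : nat) (x : d.-tuple R) : R :=
  Num.sqrt (\sum_(i < d) (tnth x i) ^+ 2).
Definition edist (d : nat) (x y : d.-tuple R) : R :=
  Num.sqrt (\sum_(i < d) (tnth x i - tnth y i) ^+ 2).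

Definition lipschitz_with (d : nat) (L : R) (f : d.-tuple R -> R) :=
  forall x y, `|f x - f y| <= L * edist x y.
Definition lipconst (d : nat) (f : d.-tuple R -> R) : R :=
  inf [set L | 0 <= L /\ lipschitz_with L f].
Definition econtinuous (d : nat) (f : d.-tuple R -> R) :=
  forall x (e : R), 0 < e ->
    exists2 del : R, 0 < del & forall y, edist x y < del -> `|f x - f y| < e.

Definition phiFG (d : nat) (alpha kappa : R) : R :=
  if kappa <= 1 then
    (if d == 1%N then kappa ^+ 2
     else if d == 2%N then (kappa / ln (2 + kappa^-1)) ^+ 2
     else kappa ^+ d)
  else powR kappa alpha.

Section Nu.
Variable d : nat.
Variable nu : probability (d.-tuple R) R.

Definition Enu (f : d.-tuple R -> R) : R := fine (\int[nu]_x (f x)%:E).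
Definition Varnu (f : d.-tuple R -> R) : R :=
  Enu (fun x => f x ^+ 2) - (Enu f) ^+ 2.
Definition l2norm (f : d.-tuple R -> R) : R := Num.sqrt (Varnu f).
Definition linf (f : d.-tuple R -> R) : \bar R :=
  ess_sup nu (fun x => (`|f x|)%:E).

Definition in_L2 (f : d.-tuple R -> R) :=
  measurable_fun setT f /\ nu.-integrable setT (fun x => (f x ^+ 2)%:E).
Definition in_L20 (f : d.-tuple R -> R) := in_L2 f /\ Enu f = 0.

Definition L2_lin_indep (n : nat) (h : 'I_n -> d.-tuple R -> R) :=
  forall a : 'I_n -> R,
    {ae nu, forall x, \sum_(i < n) a i * h i x = 0} -> forall i, a i = 0.

Definition centred (P : Type) (f : P -> d.-tuple R -> R) (mu : P) :=
  fun x => f mu x - Enu (f mu).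

Definition kolmogorov_width (P : Type) (Pset : set P)
    (g : P -> d.-tuple R -> R) (n : nat) : R :=
  inf [set w | exists h : 'I_n -> d.-tuple R -> R,
        [/\ forall i, in_L20 (h i), L2_lin_indep h &
            w = sup [set inf [set l2norm (fun x => g mu x - \sum_(i < n) a i * h i x)
                             | a in [set: 'I_n -> R]]
                    | mu in Pset]]].

(* compactness of M = {g mu | mu in Pset} in the metric space L^2_{nu,0},
   written as sequential compactness (equivalent in metric spaces) *)
Definition L2_compact (P : Type) (Pset : set P) (g : P -> d.-tuple R -> R) :=
  forall u : nat -> P, (forall n, Pset (u n)) ->
    exists (s : nat -> nat) (mu : P),
      [/\ {homo s : m n / (m < n)%N >-> (m < n)%N}, Pset mu &
          (fun n => l2norm (fun x => g (u (s n)) x - g mu x)) @ \oo --> (0 : R)].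
End Nu.

Definition Eemp (d M : nat) (xs : nat -> d.-tuple R) (f : d.-tuple R -> R) : R :=
  M%:R^-1 * \sum_(k < M) f (xs k).
Definition Varemp (d M : nat) (xs : nat -> d.-tuple R) (f : d.-tuple R -> R) : R :=
  Eemp M xs (fun x => f x ^+ 2) - (Eemp M xs f) ^+ 2.

Definition iid_law (dO : measure_display) (Omega : measurableType dO)
    (Pr : probability Omega R) (d : nat) (nu : probability (d.-tuple R) R)
    (X : nat -> Omega -> d.-tuple R) :=
  [/\ forall k, measurable_fun setT (X k),
      forall k (A : set (d.-tuple R)), measurable A -> Pr (X k @^-1` A) = nu A &
      forall (n : nat) (A : nat -> set (d.-tuple R)),
        (forall k, measurable (A k)) ->
        Pr (\bigcap_(k in [set k | (k < n)%N]) (X k @^-1` A k)) =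
        (\prod_(k < n) Pr (X k @^-1` A k))%E].

End Defs.

(* The functions g_mu are K_L-Lipschitz and bounded by K_inf nu-a.e.; being
   continuous, they are bounded by K_inf on a common nu-full set S, where they
   agree with their truncations to [-K_inf, K_inf], and almost surely every
   sample lies in S.  For a bounded Lipschitz u, the Fournier-Guillin deviation
   applied to the 1-Lipschitz functions u / K_L and u^2 / (2 K_inf K_L) puts the
   empirical variance within 4 K_inf K_L kappa of the true one, so the empirical
   maximiser loses at most 8 K_inf K_L kappa0 = (1 - gamma^2) sigma0hat^2 against
   the true supremum.  The choice of M_1 makes this fail with probability at
   most delta_1; that M_1 > 0 comes from C >= 1, since a single sample point is
   always far from nu as seen by the test function (u - u(x))^2. *)

From Pilot Require Import Defs.
From HB Require Import structures.
From mathcomp Require Import all_boot all_order all_algebra.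
From mathcomp Require Import all_classical all_reals all_analysis.
From mathcomp Require Import ess_sup_inf.
From mathcomp Require Import ring lra.
Set Implicit Arguments.
Unset Strict Implicit.
Unset Printing Implicit Defensive.
Import Order.TTheory GRing.Theory Num.Theory.
Import numFieldNormedType.Exports.
Local Open Scope classical_set_scope.
Local Open Scope ring_scope.

Section Lipschitz.
Variables (R : realType) (d : nat).
Implicit Types (x y : d.-tuple R) (h u : d.-tuple R -> R).

Lemma edist_ge0 x y : 0 <= Defs.edist x y.
Proof. exact: sqrtr_ge0. Qed.

Lemma edist_le_coord x y (t : R) : 0 <= t ->
  (forall i, `|tnth x i - tnth y i| <= t) -> Defs.edist x y <= t * d%:R.
Proof.
move=> t0 xy; rewrite /Defs.edist -[t * _]ger0_norm ?mulr_ge0 // -sqrtr_sqr.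
apply: ler_wsqrtr; apply: (@le_trans _ _ (\sum_(i < d) t ^+ 2)).
  by apply: ler_sum => i _; rewrite -real_normK ?num_real // lerXn2r ?nnegrE.
rewrite sumr_const card_ord exprMn -[t ^+ 2 *+ d]mulr_natr; apply: (ler_wpM2l (sqr_ge0 t)).
by case: d => [|n]; rewrite ?expr0n // expr2 ler_peMl // ler1n.
Qed.

Lemma lipschitz_withW (L L' : R) h :
  L <= L' -> lipschitz_with L h -> lipschitz_with L' h.
Proof. by move=> LL' hL x y; apply: le_trans (hL x y) (ler_wpM2r (edist_ge0 x y) LL'). Qed.

Lemma lipschitz_with_norm (L : R) h :
  lipschitz_with L h -> lipschitz_with L (fun x => `|h x|).
Proof. by move=> hL x y; apply: le_trans (ler_dist_dist _ _) (hL x y). Qed.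

Lemma lipschitz_with_divr (L : R) h : 0 < L ->
  lipschitz_with L h -> lipschitz_with 1 (fun x => h x / L).
Proof.
move=> L0 hL x y; rewrite -mulrBl normrM (gtr0_norm (_ : 0 < L^-1)) ?invr_gt0 // mul1r.
by rewrite ler_pdivrMr // mulrC.
Qed.

Lemma lipschitz_with_econtinuous (L : R) h : lipschitz_with L h -> econtinuous h.
Proof.
move=> hL x e e0; have L1 : 0 < `|L| + 1 by rewrite ltr_wpDl.
exists (e / (`|L| + 1)) => [|y xy]; first by rewrite divr_gt0.
apply: le_lt_trans (hL x y) _.
apply: le_lt_trans (ler_wpM2r (edist_ge0 x y) (ler_norm L)) _.
apply: le_lt_trans (ler_wpM2l (normr_ge0 L) (ltW xy)) _.
by rewrite mulrA ltr_pdivrMr // mulrDr mulr1 mulrC ltrDl.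
Qed.

Lemma lipschitz_with_sqr_subr (K L a : R) u : 0 <= L ->
  (forall x, `|u x| <= K) -> lipschitz_with L u ->
  lipschitz_with (2 * (K + `|a|) * L) (fun x => (u x - a) ^+ 2).
Proof.
move=> L0 uK uL x y.
have sum_le : `|u x + u y - 2 * a| <= 2 * (K + `|a|).
  have := uK x; have := uK y; have := ler_norm a; have := ler_norm (- a).
  by rewrite normrN !ler_norml => ? ? /andP[? ?] /andP[? ?]; apply/andP; split; lra.
have -> : (u x - a) ^+ 2 - (u y - a) ^+ 2 = (u x - u y) * (u x + u y - 2 * a) by ring.
have -> : 2 * (K + `|a|) * L * Defs.edist x y = L * Defs.edist x y * (2 * (K + `|a|)) by ring.
by rewrite normrM ler_pM.
Qed.

Lemma lipconst_spec h (L : R) : lipschitz_with L h ->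
  [/\ 0 <= lipconst h, lipschitz_with (lipconst h) h &
      forall L', 0 <= L' -> lipschitz_with L' h -> lipconst h <= L'].
Proof.
move=> hL; set E := [set L | 0 <= L /\ lipschitz_with L h].
have EL : E (Num.max L 0).
  by split; [rewrite le_max lexx orbT | apply: lipschitz_withW hL; rewrite le_max lexx].
have nE : E !=set0 by exists (Num.max L 0).
have lbE : lbound E 0 by move=> L' [].
split=> [|x y|L' L'0 hL']; first exact: lb_le_inf nE lbE.
- have := edist_ge0 x y; rewrite le_eqVlt => /predU1P[xy0|xy0].
    by have := EL.2 x y; rewrite -xy0 !mulr0.
  rewrite -ler_pdivrMr //; apply: lb_le_inf nE _ => L' [_ hL'].
  by rewrite ler_pdivrMr.
- by apply: ge_inf; [exists 0 | split].
Qed.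

End Lipschitz.

Section Clamp.
Variable R : realType.

Definition clamp (K t : R) : R := Num.max (- K) (Num.min K t).

Lemma clamp_norm_le K t : 0 <= K -> `|clamp K t| <= K.
Proof.
move=> K0; rewrite /clamp /Num.max /Num.min ler_norml.
by case: (ltP K t); case: (ltP (- K) K); case: (ltP (- K) t) => * /=; apply/andP; split; lra.
Qed.

Lemma clamp_id K t : `|t| <= K -> clamp K t = t.
Proof.
by rewrite ler_norml => /andP[tK Kt]; rewrite /clamp (min_idPr Kt) (max_idPr tK).
Qed.

Lemma clamp_lipschitz K s t : `|clamp K s - clamp K t| <= `|s - t|.
Proof.
rewrite /clamp /Num.max /Num.min.
have ? := ler_norm (s - t); have := ler_norm (t - s); rewrite distrC => ?.
case: (ltP K s); case: (ltP K t); case: (ltP (- K) K); case: (ltP (- K) s);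
  case: (ltP (- K) t) => * /=; rewrite ler_norml; apply/andP; split; lra.
Qed.

Lemma measurable_clamp dT (T : measurableType dT) K (h : T -> R) :
  measurable_fun setT h -> measurable_fun setT (fun x => clamp K (h x)).
Proof.
move=> mh; apply: (measurable_realfun.measurable_maxr (f := cst (- K))) => //.
exact: measurable_realfun.measurable_minr.
Qed.

End Clamp.

Section LipschitzFamily.
Variables (R : realType) (d : nat) (T : Type) (P : set T).
Variables (g : T -> d.-tuple R -> R) (L : R).
Hypothesis gL : forall mu, P mu -> lipschitz_with L (g mu).

Let lipconst_family_ubound : has_ubound [set lipconst (g mu) | mu in P].
Proof.
exists (Num.max L 0) => _ [mu Pmu <-]; have [_ _ ->] := lipconst_spec (gL Pmu) => //.
  by rewrite le_max lexx orbT.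
by apply: lipschitz_withW (gL Pmu); rewrite le_max lexx.
Qed.

Lemma lipschitz_with_sup_lipconst mu : P mu ->
  lipschitz_with (sup [set lipconst (g mu) | mu in P]) (g mu).
Proof.
move=> Pmu; have [_ gmuL _] := lipconst_spec (gL Pmu).
by apply: lipschitz_withW gmuL; apply: ub_le_sup lipconst_family_ubound _ _; exists mu.
Qed.

Lemma sup_lipconst_ge0 mu : P mu -> 0 <= sup [set lipconst (g mu) | mu in P].
Proof.
move=> Pmu; have [lip0 _ _] := lipconst_spec (gL Pmu).
by apply: le_trans lip0 _; apply: ub_le_sup lipconst_family_ubound _ _; exists mu.
Qed.

End LipschitzFamily.

Section EssentialBoundFamily.
Variables (R : realType) (d : nat) (nu : probability (d.-tuple R) R).
Variables (T : Type) (P : set T) (g : T -> d.-tuple R -> R).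
Hypothesis g_linf : (ereal_sup [set linf nu (g mu) | mu in P] < +oo)%E.

Let sup_linf_ge0 mu : P mu -> (0 <= ereal_sup [set linf nu (g mu) | mu in P])%E.
Proof.
move=> Pmu; apply: le_trans (ereal_sup_ubound (ex_intro2 _ _ mu Pmu erefl)).
apply: (ess_sup_ger (f := fun x => `|g mu x|)) => [|t]; last by rewrite lee_fin.
by rewrite [X in (_ < X)%E]probability_setT lte01.
Qed.

Lemma fine_sup_linf_ge0 mu : P mu ->
  0 <= fine (ereal_sup [set linf nu (g mu) | mu in P]).
Proof. by move=> Pmu; exact: fine_ge0 (sup_linf_ge0 Pmu). Qed.

Lemma ae_norm_le_sup_linf mu : P mu ->
  \forall x \ae nu, `|g mu x| <= fine (ereal_sup [set linf nu (g mu) | mu in P]).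
Proof.
move=> Pmu; have : (linf nu (g mu) <= ereal_sup [set linf nu (g mu) | mu in P])%E.
  by apply: ereal_sup_ubound; exists mu.
rewrite -[X in (_ <= X)%E]fineK ?ge0_fin_numE ?(sup_linf_ge0 Pmu) //.
by move/ess_supP; apply: filterS => x; rewrite lee_fin.
Qed.

End EssentialBoundFamily.

Section Support.
Variables (R : realType) (d : nat) (nu : probability (d.-tuple R) R).

Definition box (c : d.-tuple R) (r : R) : set (d.-tuple R) :=
  [set y | forall i, `|tnth y i - tnth c i| < r].

Lemma measurable_box c r : measurable (box c r).
Proof.
have -> : box c r = \bigcap_(i in [set: 'I_d]) [set y | `|tnth y i - tnth c i| < r].
  by apply/seteqP; split=> [y yc i _|y yc i]; [exact: yc | exact: yc].
apply: fin_bigcap_measurable => [|i _]; first exact: finite_finset.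
have mi : measurable_fun setT (fun y : d.-tuple R => `|tnth y i - tnth c i|).
  apply: measurableT_comp; first exact: measurable_realfun.normr_measurable.
  by apply: measurable_realfun.measurable_funB; [exact: measurable_tnth | exact: measurable_cst].
have := mi measurableT _ (measurable_itv `]-oo, r[); rewrite setTI.
by congr measurable; apply/seteqP; split=> y; rewrite /= in_itv.
Qed.

Definition rat_box (qr : d.-tuple rat * rat) : set (d.-tuple R) :=
  box (map_tuple ratr qr.1) (ratr qr.2).

Lemma rat_box_near x (e : R) : 0 < e ->
  exists qr, rat_box qr x /\ rat_box qr `<=` [set y | Defs.edist x y < e].
Proof.
move=> e0; have d1 : 0 < 2 * d%:R + 1 :> R by rewrite ltr_wpDl ?mulr_ge0.
have [r] := @rat_in_itvoo R 0 (e / (2 * d%:R + 1)) (divr_gt0 e0 d1).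
rewrite in_itv /= => /andP[r0 re].
have [q xq] : {q : 'I_d -> rat & forall i, `|tnth x i - ratr (q i)| < ratr r}.
  apply: (@choice _ _ (fun i (q : rat) => `|tnth x i - ratr q| < ratr r :> R)) => i.
  have [q] := @rat_in_itvoo R (tnth x i - ratr r) (tnth x i + ratr r) ltac:(lra).
  by rewrite in_itv /= => /andP[? ?]; exists q; rewrite ltr_norml; apply/andP; split; lra.
exists ([tuple q i | i < d], r); split=> [i|y yq /=].
  by rewrite /rat_box /box tnth_map tnth_mktuple; exact: xq.
have xy i : `|tnth x i - tnth y i| <= ratr r * 2.
  have := xq i; have := yq i; rewrite tnth_map tnth_mktuple => yi xi.
  have -> : tnth x i - tnth y i = (tnth x i - ratr (q i)) - (tnth y i - ratr (q i)) by ring.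
  by apply: le_trans (ler_normB _ _) _; lra.
apply: le_lt_trans (edist_le_coord (ltac:(lra) : 0 <= ratr r * 2) xy) _.
move: re; rewrite ltr_pdivlMr //; nra.
Qed.

Definition null_rat_box (n : nat) : set (d.-tuple R) :=
  if unpickle n is Some qr then
    if nu (rat_box qr) == 0%E then rat_box qr else set0
  else set0.

(* S avoids every nu-null rational box; a continuous function exceeding K at a
   point of S exceeds K on a rational box around it, which is then not null. *)
Lemma continuous_ae_le_full_set : exists S, [/\ measurable S, nu (~` S) = 0%E &
  forall h K, econtinuous h -> (\forall x \ae nu, h x <= K) ->
    forall x, S x -> h x <= K].
Proof.
have null_box n : nu.-negligible (null_rat_box n).
  rewrite /null_rat_box; case: unpickle => [qr|]; last exact: negligible_set0.
  case: eqP => [null|_]; last exact: negligible_set0.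
  by apply/negligibleP => //; exact: measurable_box.
have [N [mN N0 boxN]] := negligible_bigcup null_box.
exists (~` N); split=> [|//|h K hc hK x /= Nx]; first exact: measurableC.
  by rewrite setCK.
rewrite leNgt; apply/negP => Khx.
have [del del0 hdel] := hc x (h x - K) ltac:(by rewrite subr_gt0).
have [qr [qrx qr_near]] := rat_box_near x del0.
have qr_null : nu (rat_box qr) = 0%E.
  have [N' [mN' N'0 hN']] := hK.
  apply/eqP; rewrite eq_le measure_ge0 andbT -N'0 le_measure ?inE //.
    exact: measurable_box.
  move=> y /qr_near /hdel; rewrite ltr_norml => /andP[_ hy]; apply: hN' => /=; lra.
by apply: Nx; apply: boxN; exists (pickle qr) => //; rewrite /null_rat_box pickleK qr_null eqxx.
Qed.

Lemma lipschitz_family_bounded_on_full_set (T : Type) (P : set T)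
    (g : T -> d.-tuple R -> R) (L : R) :
  (ereal_sup [set linf nu (g mu) | mu in P] < +oo)%E ->
  (forall mu, P mu -> lipschitz_with L (g mu)) ->
  exists S, [/\ measurable S, nu (~` S) = 0%E & forall mu x, P mu -> S x ->
    `|g mu x| <= fine (ereal_sup [set linf nu (g mu) | mu in P])].
Proof.
move=> g_linf gL; have [S [mS nS S_le]] := continuous_ae_le_full_set.
exists S; split=> // mu x Pmu; apply: S_le (ae_norm_le_sup_linf g_linf Pmu) x.
exact: lipschitz_with_econtinuous (lipschitz_with_norm (gL mu Pmu)).
Qed.

End Support.

Section Expectation.
Variables (R : realType) (d : nat) (nu : probability (d.-tuple R) R).
Implicit Types (u v h : d.-tuple R -> R).

Lemma integrable_bounded u (K : R) : measurable_fun setT u ->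
  (forall x, `|u x| <= K) -> nu.-integrable setT (EFin \o u).
Proof.
move=> um uK; apply: measurable_bounded_integrable => //.
  by apply: le_lt_trans (probability_le1 _ measurableT) _; rewrite ltry.
by exists K; split=> [|M KM x _]; [exact: num_real | exact: le_trans (uK x) (ltW KM)].
Qed.

Lemma integrable_sqr u (K : R) : measurable_fun setT u ->
  (forall x, `|u x| <= K) -> nu.-integrable setT (EFin \o (fun x => u x ^+ 2)).
Proof.
move=> um uK; apply: (integrable_bounded (K := K ^+ 2)).
  exact: measurable_realfun.measurable_funX.
by move=> x; rewrite normrX lerXn2r ?nnegrE ?(le_trans _ (uK x)).
Qed.

Lemma integrable_sqr_subr u (K a : R) : measurable_fun setT u ->
  (forall x, `|u x| <= K) -> nu.-integrable setT (EFin \o (fun x => (u x - a) ^+ 2)).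
Proof.
move=> um uK; apply: (integrable_sqr (K := K + `|a|)).
  by apply: measurable_realfun.measurable_funB => //; exact: measurable_cst.
by move=> x; apply: le_trans (ler_normB _ _) _; rewrite lerD2r.
Qed.

Let EnuE h : Enu nu h = Rintegral nu setT h.
Proof. by []. Qed.

Lemma Enu_cst (a : R) : Enu nu (fun _ => a) = a.
Proof. by rewrite EnuE Rintegral_cst // [X in fine X]probability_setT mulr1.
Qed.

Lemma Enu_divr h (a : R) : nu.-integrable setT (EFin \o h) ->
  Enu nu (fun x => h x / a) = Enu nu h / a.
Proof. exact: RintegralZr. Qed.

Lemma Enu_le h1 h2 : nu.-integrable setT (EFin \o h1) ->
  nu.-integrable setT (EFin \o h2) -> (forall x, h1 x <= h2 x) ->
  Enu nu h1 <= Enu nu h2.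
Proof. by move=> i1 i2 h12; apply: le_Rintegral => // x _; exact: h12. Qed.

Lemma Enu_norm_le u (K : R) : measurable_fun setT u ->
  (forall x, `|u x| <= K) -> `|Enu nu u| <= K.
Proof.
move=> um uK; have iu := integrable_bounded um uK.
have iK c : nu.-integrable setT (EFin \o (fun=> c)).
  by apply: (integrable_bounded (K := `|c|)) => //; exact: measurable_cst.
rewrite ler_norml; apply/andP; split.
  by rewrite -(Enu_cst (- K)); apply: Enu_le => // x; have := uK x; rewrite ler_norml => /andP[].
by rewrite -[X in _ <= X](Enu_cst K); apply: Enu_le => // x; exact: le_trans (ler_norm _) (uK x).
Qed.

Lemma measurable_centred (P : Type) (f : P -> d.-tuple R -> R) mu :
  measurable_fun setT (f mu) -> measurable_fun setT (centred nu f mu).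
Proof. by move=> mf; apply: measurable_realfun.measurable_funB => //; exact: measurable_cst. Qed.

Lemma Enu_eq_on (S : set (d.-tuple R)) u v : measurable S -> nu (~` S) = 0%E ->
  measurable_fun setT u -> measurable_fun setT v ->
  (forall x, S x -> u x = v x) -> Enu nu u = Enu nu v.
Proof.
move=> mS nS um vm uv; congr fine; apply: ae_eq_integral => //.
- exact/measurable_realfun.measurable_EFinP.
- exact/measurable_realfun.measurable_EFinP.
exists (~` S); split=> [||x /= uvx]; [exact: measurableC | by [] |].
by move=> Sx; apply: uvx => _; rewrite uv.
Qed.

Lemma Varnu_eq_on (S : set (d.-tuple R)) u v : measurable S -> nu (~` S) = 0%E ->
  measurable_fun setT u -> measurable_fun setT v ->
  (forall x, S x -> u x = v x) -> Varnu nu u = Varnu nu v.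
Proof.
move=> mS nS um vm uv; rewrite /Varnu (Enu_eq_on mS nS um vm uv).
rewrite (Enu_eq_on mS nS (measurable_realfun.measurable_funX 2 um)
  (measurable_realfun.measurable_funX 2 vm)) // => x Sx.
by rewrite uv.
Qed.

Lemma Enu_sqr_subr v (a : R) : nu.-integrable setT (EFin \o v) ->
  nu.-integrable setT (EFin \o (fun x => v x ^+ 2)) ->
  Enu nu (fun x => (v x - a) ^+ 2) = Enu nu (fun x => v x ^+ 2) - 2 * a * Enu nu v + a ^+ 2.
Proof.
move=> iv iv2; have ic : nu.-integrable setT (EFin \o (fun=> a ^+ 2)).
  by apply: (integrable_bounded (K := `|a ^+ 2|)) => //; exact: measurable_cst.
have iav : nu.-integrable setT (EFin \o (fun x => - (2 * a) * v x)).
  exact: eq_integrable (integrableZl measurableT (- (2 * a)) iv).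
have iavc : nu.-integrable setT (EFin \o (fun x => - (2 * a) * v x + a ^+ 2)).
  exact: eq_integrable (integrableD measurableT iav ic).
have -> : (fun x => (v x - a) ^+ 2) = (fun x => v x ^+ 2 + (- (2 * a) * v x + a ^+ 2)).
  by apply/funext => x; ring.
rewrite !EnuE RintegralD // RintegralD // RintegralZl // -(EnuE (fun=> a ^+ 2)) Enu_cst.
by rewrite -!EnuE; ring.
Qed.

Lemma Varnu_le_Enu_sqr_subr v (a : R) : nu.-integrable setT (EFin \o v) ->
  nu.-integrable setT (EFin \o (fun x => v x ^+ 2)) ->
  Varnu nu v <= Enu nu (fun x => (v x - a) ^+ 2).
Proof.
move=> iv iv2; rewrite Enu_sqr_subr // /Varnu.
by have := sqr_ge0 (Enu nu v - a); rewrite sqrrB; lra.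
Qed.

Lemma Varnu_le_sqr u (K : R) : measurable_fun setT u ->
  (forall x, `|u x| <= K) -> Varnu nu u <= K ^+ 2.
Proof.
move=> um uK; have K0 : 0 <= K by apply: le_trans (uK (nseq_tuple d 0)).
have iK2 : nu.-integrable setT (EFin \o (fun=> K ^+ 2)).
  by apply: (integrable_bounded (K := `|K ^+ 2|)) => //; exact: measurable_cst.
have : Enu nu (fun x => u x ^+ 2) <= K ^+ 2.
  rewrite -[X in _ <= X](Enu_cst (K ^+ 2)); apply: Enu_le => [||x].
  - exact: integrable_sqr uK.
  - exact: iK2.
  by rewrite -real_normK ?num_real // lerXn2r ?nnegrE.
by rewrite /Varnu; have := sqr_ge0 (Enu nu u); lra.
Qed.

Lemma Varnu_lipschitz_with0 h : lipschitz_with 0 h -> Varnu nu h = 0.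
Proof.
move=> h0; have -> : h = fun=> h (nseq_tuple d 0).
  apply/funext => x; apply/eqP; rewrite -subr_eq0 -normr_le0.
  by have := h0 x (nseq_tuple d 0); rewrite mul0r.
by rewrite /Varnu !Enu_cst subrr.
Qed.

End Expectation.

Section Empirical.
Variables (R : realType) (d M : nat) (xs : nat -> d.-tuple R).
Implicit Types (h u : d.-tuple R -> R).

Lemma Eemp_eq_on (S : set (d.-tuple R)) h1 h2 : (forall k, S (xs k)) ->
  (forall x, S x -> h1 x = h2 x) -> Eemp M xs h1 = Eemp M xs h2.
Proof. by move=> xsS h12; congr (_ * _); apply: eq_bigr => k _; exact: h12. Qed.

Lemma Varemp_eq_on (S : set (d.-tuple R)) h1 h2 : (forall k, S (xs k)) ->
  (forall x, S x -> h1 x = h2 x) -> Varemp M xs h1 = Varemp M xs h2.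
Proof.
move=> xsS h12; rewrite /Varemp (Eemp_eq_on xsS h12).
by rewrite (Eemp_eq_on (h2 := fun x => h2 x ^+ 2) xsS) // => x Sx; rewrite h12.
Qed.

Lemma Eemp_divr h (a : R) : Eemp M xs (fun x => h x / a) = Eemp M xs h / a.
Proof. by rewrite /Eemp -mulr_suml mulrA. Qed.

Lemma Eemp_norm_le u (K : R) : 0 <= K -> (forall x, `|u x| <= K) -> `|Eemp M xs u| <= K.
Proof.
move=> K0 uK; rewrite /Eemp normrM ger0_norm ?invr_ge0 //.
have : `|\sum_(k < M) u (xs k)| <= K *+ M.
  rewrite -[X in K *+ X](card_ord M) -sumr_const.
  by apply: le_trans (ler_norm_sum _ _ _) (ler_sum _ _) => k _.
case: M => [|n]; first by rewrite invr0 mul0r.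
by rewrite -ler_pdivlMl ?invr_gt0 ?ltr0n // invrK mulr_natl.
Qed.

End Empirical.

Section LipschitzDeviation.
Variables (R : realType) (d : nat) (nu : probability (d.-tuple R) R).

Definition lip_deviation (M : nat) (xs : nat -> d.-tuple R) : \bar R :=
  ereal_sup [set (`|Enu nu h - Eemp M xs h|)%:E | h in [set h | lipschitz_with 1 h]].

Lemma lip_deviation_ge M xs h : lipschitz_with 1 h ->
  ((`|Enu nu h - Eemp M xs h|)%:E <= lip_deviation M xs)%E.
Proof. by move=> hL; apply: ereal_sup_ubound; exists h. Qed.

Lemma lipschitz_deviation_lt M xs h (L kappa : R) : 0 < L ->
  nu.-integrable setT (EFin \o h) -> lipschitz_with L h ->
  (lip_deviation M xs < kappa%:E)%E -> `|Enu nu h - Eemp M xs h| < L * kappa.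
Proof.
move=> L0 ih hL dev.
have := le_lt_trans (lip_deviation_ge M xs (lipschitz_with_divr L0 hL)) dev.
rewrite lte_fin Enu_divr // Eemp_divr -mulrBl normrM (gtr0_norm (_ : 0 < L^-1)) ?invr_gt0 //.
by rewrite ltr_pdivrMr // mulrC.
Qed.

Variables (u : d.-tuple R -> R) (K L : R).
Hypotheses (K0 : 0 < K) (L0 : 0 < L) (um : measurable_fun setT u).
Hypotheses (uK : forall x, `|u x| <= K) (uL : lipschitz_with L u).

Lemma Varemp_near_Varnu M xs (kappa : R) : (lip_deviation M xs < kappa%:E)%E ->
  `|Varemp M xs u - Varnu nu u| < 4 * K * L * kappa.
Proof.
move=> dev.
have u2L : lipschitz_with (2 * K * L) (fun x => u x ^+ 2).
  move=> x y; have := lipschitz_with_sqr_subr 0 (ltW L0) uK uL x y.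
  by rewrite !subr0 normr0 addr0.
have := lipschitz_deviation_lt L0 (integrable_bounded nu um uK) uL dev.
have := lipschitz_deviation_lt (ltac:(by rewrite !mulr_gt0) : 0 < 2 * K * L)
  (integrable_sqr nu um uK) u2L dev.
rewrite ![`|Enu nu _ - _|]distrC => dev2 dev1.
have sum_le : `|Eemp M xs u + Enu nu u| <= 2 * K.
  apply: le_trans (ler_normD _ _) _.
  by have := Eemp_norm_le M xs (ltW K0) uK; have := Enu_norm_le nu um uK; lra.
have -> : Varemp M xs u - Varnu nu u = (Eemp M xs (fun x => u x ^+ 2) - Enu nu (fun x => u x ^+ 2))
    - (Eemp M xs u - Enu nu u) * (Eemp M xs u + Enu nu u) by rewrite /Varemp /Varnu; ring.
apply: le_lt_trans (ler_normB _ _) _; rewrite normrM.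
by have := ler_pM (normr_ge0 _) (normr_ge0 _) (ltW dev1) sum_le; lra.
Qed.

(* The test function (u - u (xs 0))^2 vanishes at the only sample point. *)
Lemma Varnu_le_one_sample_deviation xs :
  ((Varnu nu u / (4 * K * L))%:E <= lip_deviation 1 xs)%E.
Proof.
set a := u (xs 0%N); have KL0 : 0 < 4 * K * L by rewrite !mulr_gt0.
have hL : lipschitz_with 1 (fun x => (u x - a) ^+ 2 / (4 * K * L)).
  apply: lipschitz_with_divr (lipschitz_withW _ (lipschitz_with_sqr_subr a (ltW L0) uK uL)) => //.
  by have := ler_wpM2r (ltW L0) (uK (xs 0%N)); rewrite -/a; lra.
apply: le_trans (lip_deviation_ge 1 xs hL); rewrite lee_fin.
rewrite /Eemp big_ord1 /a subrr expr2 !mul0r mulr0 subr0 Enu_divr; last first.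
  exact: integrable_sqr_subr um uK.
apply: le_trans (ler_norm _); rewrite ler_pM2r ?invr_gt0 //.
exact: Varnu_le_Enu_sqr_subr (integrable_bounded nu um uK) (integrable_sqr nu um uK).
Qed.

End LipschitzDeviation.

Lemma sup_le_near_argmax (R : realType) (T : Type) (P : set T) (V W : T -> R)
    (m : T) (e : R) :
  P m -> (forall mu, P mu -> W mu <= W m) ->
  (forall mu, P mu -> `|W mu - V mu| <= e) ->
  sup [set V mu | mu in P] <= V m + 2 * e.
Proof.
move=> Pm Wm WV; apply: ge_sup => [|_ [mu Pmu <-]]; first by exists (V m), m.
have := WV mu Pmu; have := WV m Pm; have := Wm mu Pmu; rewrite !ler_norml.
by move=> ? /andP[? ?] /andP[? ?]; lra.
Qed.

Section BoundedLipschitzFamily.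
Variables (R : realType) (d : nat) (nu : probability (d.-tuple R) R).
Variables (T : Type) (P : set T) (g : T -> d.-tuple R -> R).
Variables (K L : R) (S : set (d.-tuple R)).
Hypotheses (K0 : 0 <= K) (L0 : 0 <= L) (mS : measurable S) (nS : nu (~` S) = 0%E).
Hypothesis gm : forall mu, P mu -> measurable_fun setT (g mu).
Hypothesis gL : forall mu, P mu -> lipschitz_with L (g mu).
Hypothesis gS : forall mu x, P mu -> S x -> `|g mu x| <= K.

Let u mu x := clamp K (g mu x).

Let um mu : P mu -> measurable_fun setT (u mu).
Proof. by move=> Pmu; apply: measurable_clamp; exact: gm. Qed.

Let uK mu x : `|u mu x| <= K.
Proof. exact: clamp_norm_le. Qed.

Let uL mu : P mu -> lipschitz_with L (u mu).
Proof. by move=> Pmu x y; apply: le_trans (clamp_lipschitz _ _ _) (gL Pmu x y). Qed.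

Let u_eq mu x : P mu -> S x -> u mu x = g mu x.
Proof. by move=> Pmu Sx; apply: clamp_id; exact: gS. Qed.

Let Varnu_clamp mu : P mu -> Varnu nu (g mu) = Varnu nu (u mu).
Proof.
by move=> Pmu; apply: (Varnu_eq_on mS nS (gm Pmu) (um Pmu)) => x Sx; rewrite u_eq.
Qed.

Lemma Varnu_family_le_sqr mu : P mu -> Varnu nu (g mu) <= K ^+ 2.
Proof. by move=> Pmu; rewrite Varnu_clamp //; exact: Varnu_le_sqr (um Pmu) (uK mu). Qed.

Lemma Varnu_le_sup_family mu : P mu ->
  Varnu nu (g mu) <= sup [set Varnu nu (g mu) | mu in P].
Proof.
move=> Pmu; apply: ub_le_sup; last by exists mu.
by exists (K ^+ 2) => _ [nu' Pnu' <-]; exact: Varnu_family_le_sqr.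
Qed.

Lemma family_bounds_gt0 mu : P mu -> 0 < Varnu nu (g mu) -> 0 < K /\ 0 < L.
Proof.
move=> Pmu V0; split; rewrite lt_neqAle ?K0 ?L0 andbT; apply/eqP => b0.
  by have := Varnu_family_le_sqr Pmu; rewrite -b0 expr0n /=; lra.
by move: V0; rewrite Varnu_lipschitz_with0 ?ltxx // b0; exact: gL.
Qed.

Lemma Varemp_near_Varnu_family M xs (kappa : R) mu : 0 < K -> 0 < L ->
  (forall k, S (xs k)) -> (lip_deviation nu M xs < kappa%:E)%E -> P mu ->
  `|Varemp M xs (g mu) - Varnu nu (g mu)| < 4 * K * L * kappa.
Proof.
move=> K_gt0 L_gt0 xsS dev Pmu.
rewrite Varnu_clamp // (Varemp_eq_on (h2 := u mu) M xsS) => [|x Sx]; last by rewrite u_eq.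
exact: (Varemp_near_Varnu K_gt0 L_gt0 (um Pmu) (uK mu) (uL Pmu) dev).
Qed.

Lemma Varnu_le_one_sample_deviation_family xs mu : 0 < K -> 0 < L -> P mu ->
  ((Varnu nu (g mu) / (4 * K * L))%:E <= lip_deviation nu 1 xs)%E.
Proof.
move=> K_gt0 L_gt0 Pmu; rewrite Varnu_clamp //.
exact: (Varnu_le_one_sample_deviation nu K_gt0 L_gt0 (um Pmu) (uK mu) (uL Pmu) xs).
Qed.

Lemma sup_Varnu_le_greedy M xs (kappa : R) m : 0 < K -> 0 < L ->
  (forall k, S (xs k)) -> (lip_deviation nu M xs < kappa%:E)%E -> P m ->
  (forall mu, P mu -> Varemp M xs (g mu) <= Varemp M xs (g m)) ->
  sup [set Varnu nu (g mu) | mu in P] <= Varnu nu (g m) + 8 * K * L * kappa.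
Proof.
move=> K_gt0 L_gt0 xsS dev Pm m_max.
have -> : 8 * K * L * kappa = 2 * (4 * K * L * kappa) by ring.
apply: sup_le_near_argmax Pm m_max _ => mu Pmu.
exact/ltW/Varemp_near_Varnu_family.
Qed.

End BoundedLipschitzFamily.

Lemma phiFG_gt0 (R : realType) d (alpha kappa : R) : 0 < kappa -> 0 < phiFG d alpha kappa.
Proof.
move=> k0; rewrite /phiFG; case: ifP => _; last exact: powR_gt0.
case: eqP => _; first exact: exprn_gt0.
case: eqP => _; last exact: exprn_gt0.
apply/exprn_gt0/divr_gt0/ln_gt0 => //.
have : 0 < kappa^-1 by rewrite invr_gt0.
lra.
Qed.

Section SampleSize.
Variables (R : realType) (a delta C : R) (M : nat).
Hypotheses (a0 : 0 < a) (delta0 : 0 < delta) (C0 : 0 < C).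
Hypothesis M_large : - ln (delta / C) / a <= M%:R.

Lemma sample_size_gt0 : delta < 1 -> 1 <= C -> (0 < M)%N.
Proof.
move=> delta1 C1; rewrite lt0n; apply/eqP => M0; move: M_large.
rewrite M0 ler_pdivrMr // mul0r oppr_le0 leNgt ln_lt0 //.
by rewrite divr_gt0 //= ltr_pdivrMr // mul1r; lra.
Qed.

Lemma sample_size_tail : C * expR (- (M%:R * a)) <= delta.
Proof.
have : expR (- (M%:R * a)) <= delta / C.
  by rewrite -[X in _ <= X]lnK ?posrE ?divr_gt0 // ler_expR lerNl -ler_pdivrMr.
by move=> /(ler_wpM2l (ltW C0)); rewrite mulrCA mulfV ?gt_eqF // mulr1.
Qed.

End SampleSize.

Section Sampling.
Variables (R : realType) (dO : measure_display) (Omega : measurableType dO).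
Variable Pr : probability Omega R.

Lemma probability_inhabited : [set: Omega] !=set0.
Proof.
apply/set0P/negP => /eqP Omega0; have := probability_setT Pr.
by rewrite Omega0 measure0 => /eqP; rewrite eqe eq_sym oner_eq0.
Qed.

Lemma ge1_of_sure_le_expR (B : set Omega) (C t : R) : 0 <= t ->
  (forall w, B w) -> (Pr B <= (C * expR (- t))%:E)%E -> 1 <= C.
Proof.
move=> t0 Bw; have -> : B = setT by apply/seteqP; split=> w.
rewrite probability_setT lee_fin => C1.
have : expR (- t) <= 1 by rewrite expR_le1 oppr_le0.
by have := expR_gt0 (- t); nra.
Qed.

Lemma probability_setC_setU_null (B N : set Omega) (delta : R) :
  measurable B -> measurable N -> Pr N = 0%E -> (Pr B <= delta%:E)%E ->
  ((1 - delta)%:E <= Pr (~` (B `|` N)))%E.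
Proof.
move=> mB mN N0 Bdelta; rewrite probability_setC ?measureU0 //; last exact: measurableU.
by rewrite EFinB; apply: leeB.
Qed.

Lemma iid_law_samples_in d (nu : probability (d.-tuple R) R)
    (X : nat -> Omega -> d.-tuple R) (S : set (d.-tuple R)) :
  iid_law Pr nu X -> measurable S -> nu (~` S) = 0%E ->
  exists N, [/\ measurable N, Pr N = 0%E & forall w, ~ N w -> forall k, S (X k w)].
Proof.
move=> [mX lawX _] mS nS.
have XS k : Pr.-negligible (X k @^-1` (~` S)).
  have mXS : measurable (X k @^-1` (~` S)).
    by rewrite -[A in measurable A]setTI; exact: mX (measurableC mS).
  by apply/negligibleP => //; exact: eq_trans (lawX k _ (measurableC mS)) nS.
have [N [mN N0 XSN]] := negligible_bigcup XS.
exists N; split=> // w Nw k; apply: contrapT => XkS.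
by apply: Nw; apply: XSN; exists k.
Qed.

End Sampling.

Theorem lemma3 (R : realType) (d p : nat)
  (dO : measure_display) (Omega : measurableType dO) (Pr : probability Omega R)
  (nu : probability (d.-tuple R) R) (alpha beta : R)
  (Pset : set (p.-tuple R)) (f : p.-tuple R -> d.-tuple R -> R)
  (X : nat -> Omega -> d.-tuple R) (M1 : nat) (mubar1 : Omega -> p.-tuple R)
  (c C gamma delta1 : R) :
  (0 < d)%N ->
  (* Assumption (A) *)
  1 < alpha -> 0 < beta ->
  (\int[nu]_x (expR (beta * powR (enorm x) alpha))%:E < +oo)%E ->
  (* f_mu continuous and in L^2_nu *)
  (forall mu, Pset mu -> econtinuous (f mu) /\ in_L2 nu (f mu)) ->
  let g := centred nu f in
  (* Assumption (B) *)
  L2_compact nu Pset g ->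
  (exists K2 : R, forall mu, Pset mu -> l2norm nu (g mu) <= K2) ->
  (exists L : R, forall mu, Pset mu -> lipschitz_with L (g mu)) ->
  (ereal_sup [set linf nu (g mu) | mu in Pset] < +oo)%E ->
  (forall n : nat, 0 < kolmogorov_width nu Pset g n) ->
  let K_L := sup [set lipconst (g mu) | mu in Pset] in
  let K_inf := fine (ereal_sup [set linf nu (g mu) | mu in Pset]) in
  let sigma0hat2 := sup [set Varnu nu (g mu) | mu in Pset] in
  (* the samples Zbar^1 = (X 0, ..., X (M1-1)) are i.i.d. with law nu *)
  iid_law Pr nu X ->
  (* the Fournier--Guillin constants c, C *)
  0 < c -> 0 < C ->
  (forall (M : nat) (kappa : R), (0 < M)%N -> 0 < kappa ->
     exists B : set Omega,
       [/\ measurable B,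
           [set w | (kappa%:E <= ereal_sup
               [set (`|Enu nu h - Eemp M (fun k => X k w) h|)%:E
                 | h in [set h | lipschitz_with 1 h]])%E] `<=` B &
           (Pr B <= (C * expR (- (c * M%:R * phiFG d alpha kappa)))%:E)%E]) ->
  (* first step of the MC-greedy algorithm *)
  (forall w, [/\ Pset (mubar1 w),
     (forall mu, Pset mu ->
        Varemp M1 (fun k => X k w) (g mu) <= Varemp M1 (fun k => X k w) (g (mubar1 w))) &
     l2norm nu (g (mubar1 w)) != 0]) ->
  0 < gamma < 1 -> 0 < delta1 < 1 ->
  let kappa0 := (1 - gamma ^+ 2) * sigma0hat2 / (8 * K_inf * K_L) in
  - ln (delta1 / C) / (c * phiFG d alpha kappa0) <= M1%:R ->
  exists A : set Omega,
    [/\ measurable A,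
        A `<=` [set w | gamma ^+ 2 * sigma0hat2 <= Varnu nu (g (mubar1 w))] &
        ((1 - delta1)%:E <= Pr A)%E].
Proof.
(* Assumption (A) enters only through the Fournier-Guillin bound. *)
move=> _ _ _ _ hf g _ _ [L0 gL0] g_linf _ K_L K_inf s2 hiid c0 C0 hFG hmu
  /andP[gamma0 gamma1] /andP[delta0 delta_lt1] kappa0 M1_large.
have [w0 _] := probability_inhabited Pr.
have [P0 _] := hmu w0; rewrite sqrtr_eq0 -ltNge => V0.
have gm mu : Pset mu -> measurable_fun setT (g mu).
  by move=> Pmu; apply: measurable_centred; have [_ []] := hf mu Pmu.
have gL mu : Pset mu -> lipschitz_with K_L (g mu).
  by move=> Pmu; exact: (lipschitz_with_sup_lipconst gL0 Pmu).
have [S [mS nS gS]] := lipschitz_family_bounded_on_full_set g_linf gL.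
have K_ge0 : 0 <= K_inf := fine_sup_linf_ge0 nu g P0.
have [K_gt0 L_gt0] := family_bounds_gt0 K_ge0 (sup_lipconst_ge0 gL0 P0) mS nS gm gL gS P0 V0.
have s2_gt0 : 0 < s2 := lt_le_trans V0 (Varnu_le_sup_family K_ge0 mS nS gm gS P0).
have kappa0_gt0 : 0 < kappa0.
  by rewrite divr_gt0 ?mulr_gt0 // subr_gt0 exprn_ilt1 // ltW.
have C_ge1 : 1 <= C.
  have kappa1_gt0 : 0 < Varnu nu (g (mubar1 w0)) / (4 * K_inf * K_L) by rewrite divr_gt0 ?mulr_gt0.
  have [B1 [_ B1_sub PrB1]] := hFG 1%N _ isT kappa1_gt0.
  apply: ge1_of_sure_le_expR PrB1; first by rewrite mulr_ge0 ?mulr_ge0 ?ltW ?phiFG_gt0.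
  move=> w; apply: B1_sub.
  exact: (Varnu_le_one_sample_deviation_family K_ge0 mS nS gm gL gS _ K_gt0 L_gt0 P0).
have cphi_gt0 : 0 < c * phiFG d alpha kappa0 by rewrite mulr_gt0 ?phiFG_gt0.
have M1_gt0 := sample_size_gt0 cphi_gt0 delta0 C0 M1_large delta_lt1 C_ge1.
have [B [mB B_sub PrB]] := hFG M1 kappa0 M1_gt0 kappa0_gt0.
have [N [mN PrN N_S]] := iid_law_samples_in hiid mS nS.
exists (~` (B `|` N)); split.
- exact/measurableC/measurableU.
- move=> w /= /not_orP[Bw Nw]; have [Pm m_max _] := hmu w.
  have dev : (lip_deviation nu M1 (fun k => X k w) < kappa0%:E)%E.
    by rewrite ltNge; apply/negP => /B_sub.
  have := sup_Varnu_le_greedy K_ge0 mS nS gm gL gS K_gt0 L_gt0 (N_S w Nw) dev Pm m_max.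
  have -> : 8 * K_inf * K_L * kappa0 = (1 - gamma ^+ 2) * s2.
    by rewrite /kappa0; field; rewrite !gt_eqF.
  by rewrite -/s2; lra.
- apply: probability_setC_setU_null => //; apply: le_trans PrB _; rewrite lee_fin.
  by rewrite -mulrA mulrCA; exact: sample_size_tail.
Qed.
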